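(* Let $m\ge 2$ and $k\ge 0$ be integers. The inner multiplicity $\gamma_{\lambda_k}(\vec 0)$ of the zero weight in the irrep $\lambda_k$ of $\mathrm{SU}(m)$ (i.e. the dimension of its zero-weight space, equivalently the number of semistandard Young tableaux of shape $(2k,k,\dots,k,0)$ with entries in $\{1,\dots,m\}$ in which every entry $1,\dots,m$ occurs equally often) is $$\gamma_{\lambda_k}(\vec 0)=\binom{k+m-2}{k}.$$
   Context: For $k\in\mathbb N$, $\lambda_k$ denotes the irreducible representation of $\mathrm{SU}(m)$ with Young diagram $(2k,k,\dots,k,0)$, i.e. first row of $2k$ boxes, rows $2,\dots,m-1$ of $k$ boxes each, and empty $m$-th row. Weights are taken with respect to the diagonal maximal torus of $\mathrm{SU}(m)$; the inner multiplicity of a weight is the dimension of the corresponding weight space. *)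

From mathcomp Require Import all_boot.
Set Implicit Arguments. Unset Strict Implicit. Unset Printing Implicit Defensive.

Definition rowlen (m k i : nat) : nat :=
  if i == 0 then 2 * k else if i < m.-1 then k else 0.

Definition cell (m k : nat) := ('I_m * 'I_(2 * k))%type.

Definition in_shape (m k : nat) (c : cell m k) : bool :=
  (c.2 : nat) < rowlen m k c.1.

(* A filling assigns to each cell an entry in 'I_m, where the value a
   represents the entry a+1 in {1,...,m}.  Cells outside the shape are
   normalised to 0 so that fillings correspond bijectively to tableaux. *)
Definition filling (m k : nat) := {ffun cell m k -> 'I_m}.

Definition is_ssyt (m k : nat) (T : filling m k) : bool :=
  [&& [forall c : cell m k, ~~ in_shape c ==> (val (T c) == 0)],
      [forall i : 'I_m, forall j1 : 'I_(2 * k), forall j2 : 'I_(2 * k),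
          (in_shape ((i, j2) : cell m k) && (j1 < j2)) ==>
          (val (T (i, j1)) <= val (T (i, j2)))] &
      [forall i1 : 'I_m, forall i2 : 'I_m, forall j : 'I_(2 * k),
          (in_shape ((i2, j) : cell m k) && (i1 < i2)) ==>
          (val (T (i1, j)) < val (T (i2, j)))]].

(* Zero weight for SU(m): every entry 1..m occurs equally often, i.e.
   exactly |lambda_k|/m = k times. *)
Definition zero_content (m k : nat) (T : filling m k) : bool :=
  [forall a : 'I_m, #|[set c : cell m k | in_shape c && (T c == a)]| == k].

(* Inner multiplicity of the zero weight in lambda_k = Kostka number
   K_{lambda_k, (k,...,k)}. *)
Definition zero_weight_mult (m k : nat) : nat :=
  #|[set T : filling m k | is_ssyt T && zero_content T]|.

From mathcomp Require Import all_boot zify.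
Set Implicit Arguments. Unset Strict Implicit. Unset Printing Implicit Defensive.

(* Each of the first k columns of a tableau of shape (2k, k, ..., k, 0) has m - 1
   strictly increasing entries among m values, so it omits exactly one value g_j,
   and the row conditions force g_1 >= ... >= g_k.  If every value occurs k
   times, the second half of the first row must contain exactly the values g_j;
   being weakly increasing it is then determined by them.  Comparing the first
   row across the middle shows that no g_j is the smallest value.  Conversely
   every such weakly decreasing sequence gives a tableau, so zero-weight
   tableaux correspond to multisets of size k drawn from m - 1 values. *)

Lemma incr_chain_addn N (f : nat -> nat) :
  (forall i, i.+1 < N -> f i < f i.+1) ->
  forall i d, i + d < N -> f i + d <= f (i + d).
Proof.
move=> f_incr i; elim=> [|d IHd] lt_idN; first by rewrite !addn0.
have lt_id : i + d < N by lia.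
have := IHd lt_id; have := f_incr (i + d); rewrite !addnS; lia.
Qed.

Definition skipped N (f : nat -> nat) := find (fun i => f i != i) (iota 0 N).

Lemma skipped_le N f : skipped N f <= N.
Proof. by rewrite -[leqRHS](size_iota 0) find_size. Qed.

Lemma eq_bump_skipped N (f : nat -> nat) :
  (forall i, i.+1 < N -> f i < f i.+1) -> (forall i, i < N -> f i <= N) ->
  forall i, i < N -> f i = bump (skipped N f) i.
Proof.
move=> f_incr f_le i lt_iN; rewrite /bump.
have f_ge := incr_chain_addn f_incr.
have f_le_succ j : j < N -> f j <= j.+1.
  move=> ltjN; have := f_ge j (N.-1 - j); have := f_le N.-1.
  have -> : j + (N.-1 - j) = N.-1 by lia.
  lia.
case: (ltnP i (skipped N f)) => [lt_i_sk | le_sk_i].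
  by have := before_find 0 lt_i_sk; rewrite nth_iota // add0n => /negbFE/eqP.
have lt_skN : skipped N f < N by lia.
have has_skip : has (fun i => f i != i) (iota 0 N) by rewrite has_find size_iota.
have := nth_find 0 has_skip; rewrite -/(skipped N f) nth_iota // add0n => f_sk.
have := f_ge (skipped N f) (i - skipped N f).
have -> : skipped N f + (i - skipped N f) = i by lia.
have := f_ge 0 (skipped N f); rewrite !add0n.
have := f_le_succ (skipped N f) lt_skN; have := f_le_succ i lt_iN.
move: f_sk; lia.
Qed.

Lemma sum_bump_eq N x a :
  \sum_(0 <= i < N) (bump x i == a) = ((a < N) && (a < x)) + ((x < a) && (a <= N)).
Proof. by elim: N => [|N IHN]; rewrite ?big_nil ?big_nat_recr //= ?IHN /bump; lia. Qed.

Lemma count_mkseq (T : eqType) (f : nat -> T) n a :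
  count_mem a (mkseq f n) = \sum_(0 <= j < n) (f j == a).
Proof.
elim: n => [|n IHn]; first by rewrite big_nil.
by rewrite mkseqS -cats1 count_cat IHn big_nat_recr //= addn0 eq_sym.
Qed.

Lemma rev_mkseq (T : Type) (f : nat -> T) n :
  rev (mkseq f n) = mkseq (fun j => f (n - j.+1)) n.
Proof.
case: n => [//|n]; apply: (eq_from_nth (x0 := f 0)); rewrite ?size_rev !size_mkseq //.
by move=> j ltjn; rewrite nth_rev size_mkseq // !nth_mkseq //; lia.
Qed.

Lemma sorted_mkseq (T : Type) (e : rel T) (f : nat -> T) n :
  (forall j, j.+1 < n -> e (f j) (f j.+1)) -> sorted e (mkseq f n).
Proof.
case: n => [//|n] f_e; apply/(sortedP (f 0)) => j; rewrite size_mkseq => ltjn.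
by rewrite !nth_mkseq //; [apply: f_e | lia].
Qed.

Section LambdaTableaux.

Variables n k : nat.

Definition in_lam (i j : nat) : bool :=
  ((j < k) && (i < n.+1)) || ((k <= j < 2 * k) && (i == 0)).

Lemma in_lam_bound i j : in_lam i j -> (i < n.+2) && (j < 2 * k).
Proof. by rewrite /in_lam; lia. Qed.

Lemma in_shapeE (i : 'I_n.+2) (j : 'I_(2 * k)) :
  in_shape ((i, j) : cell n.+2 k) = in_lam i j.
Proof.
rewrite /in_shape /rowlen /in_lam /=; have := ltn_ord j.
by case: ifP => [/eqP->|_]; last case: ifP; lia.
Qed.

Definition entry (T : filling n.+2 k) (i j : nat) : nat :=
  match insub i, insub j with
  | Some i', Some j' => val (T (i', j'))
  | _, _ => 0
  end.

Lemma entryE T (i : 'I_n.+2) (j : 'I_(2 * k)) : entry T i j = val (T (i, j)).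
Proof. by rewrite /entry !valK. Qed.

Lemma entry_le T i j : entry T i j <= n.+1.
Proof.
rewrite /entry; case: (insub i) => [i'|//]; case: (insub j) => [j'|//].
exact: ltn_ord (T (i', j')).
Qed.

Lemma filling_eq T1 T2 :
  (forall i j, i < n.+2 -> j < 2 * k -> entry T1 i j = entry T2 i j) -> T1 = T2.
Proof.
move=> eq_entry; apply/ffunP => -[i j]; apply: val_inj.
by have := eq_entry i j (ltn_ord i) (ltn_ord j); rewrite !entryE.
Qed.

Definition ssyt_entries (f : nat -> nat -> nat) : Prop :=
  [/\ forall i j, i < n.+2 -> j < 2 * k -> ~~ in_lam i j -> f i j = 0,
      forall i j1 j2, in_lam i j2 -> j1 < j2 -> f i j1 <= f i j2 &
      forall i1 i2 j, in_lam i2 j -> i1 < i2 -> f i1 j < f i2 j].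

Lemma is_ssytE T : is_ssyt T <-> ssyt_entries (entry T).
Proof.
split.
  case/and3P => /forallP zero /forallP row /forallP col; split.
  - move=> i j lt_i lt_j; have := zero (Ordinal lt_i, Ordinal lt_j).
    by rewrite in_shapeE -entryE => /implyP/[apply]/eqP.
  - move=> i j1 j2 lam_ij2 lt_j12; have /andP[lt_i lt_j2] := in_lam_bound lam_ij2.
    have lt_j1 : j1 < 2 * k by lia.
    have := forallP (forallP (row (Ordinal lt_i)) (Ordinal lt_j1)) (Ordinal lt_j2).
    by rewrite in_shapeE -!entryE /= lam_ij2 lt_j12 => /implyP; apply.
  - move=> i1 i2 j lam_i2j lt_i12; have /andP[lt_i2 lt_j] := in_lam_bound lam_i2j.
    have lt_i1 : i1 < n.+2 by lia.
    have := forallP (forallP (col (Ordinal lt_i1)) (Ordinal lt_i2)) (Ordinal lt_j).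
    by rewrite in_shapeE -!entryE /= lam_i2j lt_i12 => /implyP; apply.
case=> zero row col; apply/and3P; split.
- apply/forallP => -[i j]; apply/implyP; rewrite in_shapeE -entryE => lam_ij.
  by rewrite zero.
- apply/forallP => i; apply/forallP => j1; apply/forallP => j2.
  by apply/implyP; rewrite in_shapeE -!entryE => /andP[]; apply: row.
- apply/forallP => i1; apply/forallP => i2; apply/forallP => j.
  by apply/implyP; rewrite in_shapeE -!entryE => /andP[]; apply: col.
Qed.

Definition lam_count (f : nat -> nat -> nat) (a : nat) : nat :=
  \sum_(0 <= j < 2 * k) \sum_(0 <= i < n.+2) (in_lam i j && (f i j == a)).

Lemma card_entry_eq (T : filling n.+2 k) (a : 'I_n.+2) :
  #|[set c : cell n.+2 k | in_shape c && (T c == a)]| = lam_count (entry T) a.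
Proof.
rewrite /lam_count (big_mkord xpredT) /=.
under eq_bigr do rewrite (big_mkord xpredT) /=.
rewrite exchange_big pair_big /= -sum1_card big_mkcond /=; apply: eq_bigr => -[i j] _.
by rewrite inE /= in_shapeE entryE; case: ifP.
Qed.

Definition row_tail (f : nat -> nat -> nat) : seq nat := mkseq (fun j => f 0 (k + j)) k.

Lemma lam_count_bump f x a :
  (forall j, j < k -> x j <= n.+1) ->
  (forall i j, j < k -> i < n.+1 -> f i j = bump (x j) i) -> a < n.+2 ->
  lam_count f a = \sum_(0 <= j < k) (a != x j) + count_mem a (row_tail f).
Proof.
move=> x_le f_bump lt_a; rewrite /lam_count (@big_cat_nat _ _ _ k) //=; last by lia.
congr (_ + _).
  apply: eq_big_nat => j /andP[_ lt_jk]; rewrite big_nat_recr //= {2}/in_lam lt_jk /=.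
  rewrite ltnn andbF addn0.
  under eq_big_nat => i /andP[_ lt_i] do rewrite /in_lam lt_jk lt_i f_bump //.
  by rewrite sum_bump_eq; have := x_le j lt_jk; lia.
rewrite /row_tail count_mkseq -{1}[k]add0n big_addn.
have -> : 2 * k - k = k by lia.
apply: eq_big_nat => j /andP[_ lt_jk]; rewrite big_ltn // big_nat_cond big1 => [|i].
  by rewrite addn0 /in_lam addnC; case: (_ == a); lia.
by rewrite /in_lam; lia.
Qed.

Lemma zero_content_perm T x :
  (forall j, j < k -> x j <= n.+1) ->
  (forall i j, j < k -> i < n.+1 -> entry T i j = bump (x j) i) ->
  zero_content T = perm_eq (row_tail (entry T)) (mkseq x k).
Proof.
move=> x_le T_bump.
have count_gaps a : \sum_(0 <= j < k) (a != x j) + count_mem a (mkseq x k) = k.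
  rewrite count_mkseq -big_split /= (eq_big_nat _ _ (F2 := fun=> 1)).
    by rewrite sum_nat_const_nat subn0 muln1.
  by move=> j _; rewrite eq_sym; case: (_ == _).
have count_lam (a : 'I_n.+2) : (lam_count (entry T) a == k) =
    (count_mem (a : nat) (row_tail (entry T)) == count_mem (a : nat) (mkseq x k)).
  by rewrite (lam_count_bump x_le T_bump) // -[X in _ == X](count_gaps a); lia.
apply/forallP/idP => [content | perm_tail].
  apply/allP => a _; case: (ltnP a n.+2) => [lt_a | le_a].
    by have := content (Ordinal lt_a); rewrite card_entry_eq count_lam.
  rewrite /= /row_tail !count_mkseq !big1_seq // => j /andP[_];
    rewrite mem_index_iota => /andP[_ lt_jk];
    have := x_le j lt_jk; have := entry_le T 0 (k + j); case: eqP; lia.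
by move=> a; rewrite card_entry_eq count_lam (permP perm_tail).
Qed.

Definition lam_tab (y : nat -> nat) (i j : nat) : nat :=
  if (j < k) && (i < n.+1) then bump (y (k - j.+1)) i
  else if (k <= j) && (i == 0) then y (j - k) else 0.

Lemma lam_tab_ssyt y :
  (forall j1 j2, j1 <= j2 < k -> y j1 <= y j2) -> (forall j, j < k -> 0 < y j) ->
  ssyt_entries (lam_tab y).
Proof.
move=> y_mono y_pos.
split=> [i j _ lt_j | i j1 j2 | i1 i2 j]; rewrite /lam_tab /in_lam /bump.
- by repeat case: ifP => ?; lia.
- have := y_pos (k - j1.+1); have := y_mono (k - j2.+1) (k - j1.+1).
  have := y_mono (j1 - k) (j2 - k).
  by repeat case: ifP => ?; lia.
- by repeat case: ifP => ?; lia.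
Qed.

Lemma ssyt_entries_eq f g :
  (forall i j, i < n.+2 -> j < 2 * k -> f i j = g i j) ->
  ssyt_entries f -> ssyt_entries g.
Proof.
move=> eq_fg [zero row col]; split=> [i j lt_i lt_j | i j1 j2 | i1 i2 j] lam.
- by rewrite -eq_fg ?zero.
- have /andP[lt_i lt_j2] := in_lam_bound lam => lt_j12.
  by rewrite -!eq_fg ?row //; lia.
- have /andP[lt_i2 lt_j] := in_lam_bound lam => lt_i12.
  by rewrite -!eq_fg ?col //; lia.
Qed.

Lemma lam_tab_tail y j : j < k -> lam_tab y 0 (k + j) = y j.
Proof. by move=> lt_jk; rewrite /lam_tab ltnNge leq_addr leq_addr addKn. Qed.

Lemma eq_lam_tab y1 y2 i j : (forall j, j < k -> y1 j = y2 j) -> j < 2 * k ->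
  lam_tab y1 i j = lam_tab y2 i j.
Proof.
move=> eq_y lt_j; rewrite /lam_tab; case: ifP => [/andP[lt_jk _] | _].
  by rewrite eq_y //; lia.
by case: ifP => [/andP[le_kj _] | //]; rewrite eq_y //; lia.
Qed.

Lemma lam_tab_le y i j : (forall j, y j <= n.+1) -> lam_tab y i j <= n.+1.
Proof.
move=> y_le; rewrite /lam_tab /bump; have := y_le (j - k).
by repeat case: ifP => ?; lia.
Qed.

Section ZeroWeightTableau.

Variable T : filling n.+2 k.
Hypothesis T_ssyt : ssyt_entries (entry T).
Hypothesis T_zero : zero_content T.

Let gap j := skipped n.+1 (fun i => entry T i j).

Lemma entry_gap i j : j < k -> i < n.+1 -> entry T i j = bump (gap j) i.
Proof.
have [_ _ col] := T_ssyt; move=> lt_jk; apply: eq_bump_skipped => [i' lt_i'|i' _].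
  by apply: col; rewrite /in_lam ?lt_jk //=; lia.
exact: entry_le.
Qed.

Lemma gap_le j : gap j <= n.+1.
Proof. exact: skipped_le. Qed.

Lemma gap_nonincr j1 j2 : j1 <= j2 < k -> gap j2 <= gap j1.
Proof.
have [_ row _] := T_ssyt.
rewrite leq_eqVlt => /andP[/orP[/eqP-> // | lt_j12] lt_j2]; rewrite leqNgt.
apply/negP => lt_gap; have lt_g1 : gap j1 < n.+1 by have := gap_le j2; lia.
have := row (gap j1) j1 j2; rewrite /in_lam lt_j2 lt_g1 => /(_ isT lt_j12).
by rewrite !entry_gap // /bump; lia.
Qed.

Lemma row_tail_gaps : row_tail (entry T) = mkseq (fun j => gap (k - j.+1)) k.
Proof.
have [_ row _] := T_ssyt.
apply: (sorted_eq leq_trans anti_leq).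
- by apply: sorted_mkseq => j lt_jk; apply: row => //; rewrite /in_lam; lia.
- by apply: (@sorted_mkseq _ leq) => j lt_jk; apply: gap_nonincr; lia.
rewrite -rev_mkseq perm_sym perm_rev perm_sym -zero_content_perm //.
- by move=> j _; apply: gap_le.
- exact: entry_gap.
Qed.

Lemma row_tail_entry j : j < k -> entry T 0 (k + j) = gap (k - j.+1).
Proof. by move=> lt_jk; have := congr1 (nth 0 ^~ j) row_tail_gaps; rewrite !nth_mkseq. Qed.

Lemma gap_pos j : j < k -> 0 < gap j.
Proof.
have [_ row _] := T_ssyt; move=> lt_jk.
have lam_0k : in_lam 0 k by rewrite /in_lam; lia.
have := row 0 j k lam_0k lt_jk.
have := row_tail_entry (j := 0); rewrite addn0 => -> //; last by lia.
rewrite entry_gap // /bump; have := gap_nonincr (j1 := j) (j2 := k - 1); lia.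
Qed.

Lemma entry_lam_tab i j : i < n.+2 -> j < 2 * k ->
  entry T i j = lam_tab (fun j => entry T 0 (k + j)) i j.
Proof.
move=> lt_i lt_j; rewrite /lam_tab; case: ifP => [/andP[lt_jk lt_i1] | not_col].
  by rewrite entry_gap // row_tail_entry; [congr (bump (gap _) _) | ]; lia.
case: ifP => [/andP[le_kj /eqP->] | not_tail]; first by rewrite subnKC.
have [zero _ _] := T_ssyt; apply: zero => //.
by move: not_col not_tail; rewrite /in_lam; lia.
Qed.

End ZeroWeightTableau.

(* The second half of row 0 avoids the value 0, so a tuple over 'I_n.+1 encodes
   it with every entry shifted down by one. *)
Definition tuple_tail (t : k.-tuple 'I_n.+1) (j : nat) : nat := (nth 0 (map val t) j).+1.

Lemma tuple_tail_le t j : tuple_tail t j <= n.+1.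
Proof.
rewrite /tuple_tail ltnS; case: (ltnP j k) => [lt_jk | le_kj].
  by rewrite (nth_map ord0) ?size_tuple // -ltnS ltn_ord.
by rewrite nth_default // size_map size_tuple.
Qed.

Definition lam_tableau (t : k.-tuple 'I_n.+1) : filling n.+2 k :=
  [ffun c : cell n.+2 k => inord (lam_tab (tuple_tail t) c.1 c.2)].

Lemma entry_lam_tableau t i j : i < n.+2 -> j < 2 * k ->
  entry (lam_tableau t) i j = lam_tab (tuple_tail t) i j.
Proof.
move=> lt_i lt_j; have := entryE (lam_tableau t) (Ordinal lt_i) (Ordinal lt_j).
by rewrite ffunE /= inordK // ltnS lam_tab_le //; apply: tuple_tail_le.
Qed.

Lemma lam_tableau_inj : injective lam_tableau.
Proof.
move=> t1 t2 eq_t; apply/val_inj/(inj_map val_inj)/(eq_from_nth (x0 := 0)).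
  by rewrite !size_map !size_tuple.
rewrite size_map size_tuple => j lt_jk.
have lt_kj : k + j < 2 * k by lia.
have := congr1 (fun T => entry T 0 (k + j)) eq_t.
by rewrite /= !entry_lam_tableau ?lam_tab_tail // => -[].
Qed.

Lemma lam_tableau_valid (t : k.-tuple 'I_n.+1) : sorted leq (map val t) ->
  is_ssyt (lam_tableau t) && zero_content (lam_tableau t).
Proof.
move=> t_sorted; have entry_t := entry_lam_tableau t.
have y_mono j1 j2 : j1 <= j2 < k -> tuple_tail t j1 <= tuple_tail t j2.
  move=> /andP[le_j12 lt_j2]; rewrite ltnS.
  by apply: (sorted_leq_nth leq_trans leqnn) => //; rewrite inE size_map size_tuple; lia.
apply/andP; split.
  apply/is_ssytE/(ssyt_entries_eq (f := lam_tab (tuple_tail t))).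
    by move=> i j lt_i lt_j; rewrite entry_t.
  exact: lam_tab_ssyt.
rewrite (zero_content_perm (x := fun j => tuple_tail t (k - j.+1))).
- have -> : row_tail (entry (lam_tableau t)) = mkseq (tuple_tail t) k.
    rewrite /row_tail /mkseq.
    apply/eq_in_map => j; rewrite mem_iota add0n => lt_jk.
    by rewrite entry_t ?lam_tab_tail //; lia.
  by rewrite -rev_mkseq perm_sym perm_rev.
- by move=> j _; apply: tuple_tail_le.
- by move=> i j lt_jk lt_i; rewrite entry_t /lam_tab ?lt_jk ?lt_i //; lia.
Qed.

Lemma lam_tableau_surj (T : filling n.+2 k) : is_ssyt T && zero_content T ->
  exists2 t : k.-tuple 'I_n.+1, sorted leq (map val t) & T = lam_tableau t.
Proof.
case/andP => /is_ssytE T_ssyt T_zero; have [_ row _] := T_ssyt.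
pose y j := entry T 0 (k + j).
have y_pos j : j < k -> 0 < y j.
  by move=> lt_jk; rewrite /y row_tail_entry //; apply: gap_pos => //; lia.
have sz : size (mkseq (fun j => inord (y j).-1 : 'I_n.+1) k) == k by rewrite size_mkseq.
pose t := Tuple sz.
have tail_t j : j < k -> tuple_tail t j = y j.
  move=> lt_jk; rewrite /tuple_tail (nth_map ord0) ?size_tuple // nth_mkseq //= inordK.
    by have := y_pos j lt_jk; lia.
  by have := entry_le T 0 (k + j); have := y_pos j lt_jk; rewrite /y; lia.
exists t.
  apply/(sortedP 0) => j; rewrite size_map size_tuple => lt_j1k.
  have := tail_t j; have := tail_t j.+1; rewrite /tuple_tail /y.
  have := row 0 (k + j) (k + j.+1); rewrite /in_lam; lia.
apply: filling_eq => i j lt_i lt_j.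
by rewrite entry_lam_tableau // (entry_lam_tab T_ssyt T_zero) // (eq_lam_tab i tail_t lt_j).
Qed.

End LambdaTableaux.

Theorem lemmaT3 (m k : nat) (hm : 2 <= m) :
  zero_weight_mult m k = 'C(k + m - 2, k).
Proof.
case: m hm => [|[|n]] // _; rewrite /zero_weight_mult.
have -> : [set T : filling n.+2 k | is_ssyt T && zero_content T] =
    @lam_tableau n k @: [set t : k.-tuple 'I_n.+1 | sorted leq (map val t)].
  apply/setP => T; rewrite inE; apply/idP/imsetP => [/lam_tableau_surj[t t_sorted ->] | [t]].
    by exists t; rewrite ?inE.
  by rewrite inE => /lam_tableau_valid valid ->.
rewrite card_imset; last exact: (@lam_tableau_inj n k).
by rewrite card_sorted_tuples; congr 'C(_, _); lia.
Qed.
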